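(* Let $\mathbf P=(P,\leq,{}',0,1)$ be an orthogonal lub-complete poset. Then the following conditions are equivalent: (i) $\mathbf P$ is an orthocomplemented poset. (ii) For all $x,y\in P$, $x\leq y$ implies $x\rightarrow_K y=1$. (iii) For all $x,y\in P$, $x\leq y$ implies $x\rightarrow_N y=1$.
   Context: $(P,\leq,{}',0,1)$ is a bounded poset with an antitone involution ${}'$; orthogonal means $x\leq y'$ implies $x\vee y$ exists; lub-complete means for every lower bound $x$ of a finite subset $M$ there is a maximal lower bound of $M$ above $x$; orthocomplemented means $x\vee x'=1$ for all $x$. For $A\subseteq P$, $L(A)$, $U(A)$ are the lower and upper cones, $\mathrm{Max}\,A$, $\mathrm{Min}\,A$ the sets of maximal and minimal elements; joins/meets with sets are elementwise. Kalmbach implication: $x\rightarrow_K y:=\mathrm{Max}\,L(x',y)\vee \mathrm{Max}\,L(x',y')\vee (x\wedge \mathrm{Min}\,U(x',y))$; non-tolens implication: $x\rightarrow_N y:=y'\rightarrow_K x'$. ''$=1$'' means equal to $\{1\}$. *)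

From Stdlib Require Import List.
Set Implicit Arguments.

Section Defs.
Variables (T : Type) (le : T -> T -> Prop) (c : T -> T) (zero one : T).

Definition bounded_invol_poset : Prop :=
  (forall x, le x x) /\
  (forall x y, le x y -> le y x -> x = y) /\
  (forall x y z, le x y -> le y z -> le x z) /\
  (forall x, le zero x /\ le x one) /\
  (forall x y, le x y -> le (c y) (c x)) /\
  (forall x, c (c x) = x).

Definition is_join (x y z : T) : Prop :=
  le x z /\ le y z /\ forall w, le x w -> le y w -> le z w.
Definition is_meet (x y z : T) : Prop :=
  le z x /\ le z y /\ forall w, le w x -> le w y -> le w z.

Definition Lc (A : T -> Prop) : T -> Prop := fun z => forall a, A a -> le z a.
Definition Uc (A : T -> Prop) : T -> Prop := fun z => forall a, A a -> le a z.
Definition Maxs (A : T -> Prop) : T -> Prop :=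
  fun z => A z /\ forall w, A w -> le z w -> w = z.
Definition Mins (A : T -> Prop) : T -> Prop :=
  fun z => A z /\ forall w, A w -> le w z -> w = z.
Definition pair2 (x y : T) : T -> Prop := fun z => z = x \/ z = y.

Definition orthogonal : Prop :=
  forall x y, le x (c y) -> exists z, is_join x y z.

Definition lub_complete : Prop :=
  forall (M : list T) x, Lc (fun a => In a M) x ->
    exists m, Maxs (Lc (fun a => In a M)) m /\ le x m.

Definition orthocomplemented : Prop := forall x, is_join x (c x) one.

Definition join_set (A B : T -> Prop) : T -> Prop :=
  fun z => exists a b, A a /\ B b /\ is_join a b z.
Definition meet_set (A B : T -> Prop) : T -> Prop :=
  fun z => exists a b, A a /\ B b /\ is_meet a b z.
Definition single (x : T) : T -> Prop := fun z => z = x.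

Definition impK (x y : T) : T -> Prop :=
  join_set
    (join_set (Maxs (Lc (pair2 (c x) y))) (Maxs (Lc (pair2 (c x) (c y)))))
    (meet_set (single x) (Mins (Uc (pair2 (c x) y)))).

Definition impN (x y : T) : T -> Prop := impK (c y) (c x).

Definition is_one (A : T -> Prop) : Prop := forall z, A z <-> z = one.

End Defs.

(* For x <= y the Max L(x', y') term of x ->K y is y' and the meet term is x, so
   x ->K y consists of the joins (a \/ y') \/ x with a a maximal lower bound of
   x' and y. If w is above a, y' and x, then w' is a lower bound of x' and y
   orthogonal to a, hence w' \/ a = a by maximality; so w is above a and a',
   and w = 1 when x \/ x' = 1. Conversely 0 ->K x = {x \/ x'}. The
   non-tollens implication is the Kalmbach one applied to y' <= x'. *)

From Stdlib Require Import List.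

Set Implicit Arguments.

Section OrthogonalPoset.

Variables (T : Type) (le : T -> T -> Prop) (c : T -> T) (zero one : T).
Hypothesis HP : bounded_invol_poset le c zero one.

Lemma le_refl x : le x x.
Proof. destruct HP as (Hrefl & _). apply Hrefl. Qed.

Lemma le_antisym x y : le x y -> le y x -> x = y.
Proof. destruct HP as (_ & Hanti & _). apply Hanti. Qed.

Lemma le_trans x y z : le x y -> le y z -> le x z.
Proof. destruct HP as (_ & _ & Htrans & _). apply Htrans. Qed.

Lemma le0x x : le zero x.
Proof. destruct HP as (_ & _ & _ & Hbnd & _). apply Hbnd. Qed.

Lemma lex1 x : le x one.
Proof. destruct HP as (_ & _ & _ & Hbnd & _). apply Hbnd. Qed.

Lemma c_antitone x y : le x y -> le (c y) (c x).
Proof. destruct HP as (_ & _ & _ & _ & Hc & _). apply Hc. Qed.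

Lemma cK x : c (c x) = x.
Proof. destruct HP as (_ & _ & _ & _ & _ & Hcc). apply Hcc. Qed.

Lemma le_cr x y : le x (c y) -> le y (c x).
Proof. intros Hxy. rewrite <- (cK y). apply c_antitone, Hxy. Qed.

Lemma le_cl x y : le (c x) y -> le (c y) x.
Proof. intros Hxy. rewrite <- (cK x). apply c_antitone, Hxy. Qed.

Lemma Lc_pair2 p q z : Lc le (pair2 p q) z <-> le z p /\ le z q.
Proof.
  split.
  - intros Hz. split; apply Hz; unfold pair2; auto.
  - intros [Hp Hq] e [-> | ->]; assumption.
Qed.

Lemma Uc_pair2 p q z : Uc le (pair2 p q) z <-> le p z /\ le q z.
Proof.
  split.
  - intros Hz. split; apply Hz; unfold pair2; auto.
  - intros [Hp Hq] e [-> | ->]; assumption.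
Qed.

Lemma is_join_le x y : le y x -> is_join le x y x.
Proof. intros Hxy. repeat split; auto using le_refl. Qed.

Lemma is_join_unique x y z z' : is_join le x y z -> is_join le x y z' -> z = z'.
Proof.
  intros (Hx & Hy & Hz) (Hx' & Hy' & Hz'). apply le_antisym; auto.
Qed.

Lemma is_meet_le_self x y : le x y -> is_meet le x y x.
Proof. intros Hxy. repeat split; auto using le_refl. Qed.

Lemma is_meet_le x y m : le x y -> is_meet le x y m -> m = x.
Proof.
  intros Hxy (Hm & _ & Hglb). apply le_antisym; auto using le_refl.
Qed.

Lemma Maxs_Lc_pair2_le p q :
  le q p -> forall a, Maxs le (Lc le (pair2 p q)) a <-> a = q.
Proof.
  intros Hqp a. split.
  - intros [Ha Hmax]. apply Lc_pair2 in Ha as [_ Haq].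
    symmetry. apply Hmax; [apply Lc_pair2; auto using le_refl | exact Haq].
  - intros ->. split; [apply Lc_pair2; auto using le_refl |].
    intros w Hw Hqw. apply Lc_pair2 in Hw as [_ Hwq]. apply le_antisym; auto.
Qed.

Lemma Maxs_Lc_c_Mins_Uc p q m :
  Maxs le (Lc le (pair2 (c p) (c q))) m -> Mins le (Uc le (pair2 p q)) (c m).
Proof.
  intros [Hm Hmax]. apply Lc_pair2 in Hm as [Hmp Hmq]. split.
  - apply Uc_pair2. split; apply le_cr; assumption.
  - intros w Hw Hwm. apply Uc_pair2 in Hw as [Hpw Hqw].
    rewrite <- (cK w). f_equal. apply Hmax.
    + apply Lc_pair2. split; apply c_antitone; assumption.
    + apply le_cr, Hwm.
Qed.

Hypothesis Horth : orthogonal le c.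

(* w \/ a is again a lower bound of p and q, so maximality forces it to be a. *)
Lemma Maxs_Lc_orth_le p q a w :
  Maxs le (Lc le (pair2 p q)) a -> le w p -> le w q -> le w (c a) -> le w a.
Proof.
  intros [Ha Hmax] Hwp Hwq Hwa. apply Lc_pair2 in Ha as [Hap Haq].
  destruct (Horth Hwa) as [j (Hwj & Haj & Hj)].
  replace a with j; [exact Hwj |].
  apply Hmax; [apply Lc_pair2; split; apply Hj; assumption | exact Haj].
Qed.

Lemma Maxs_Lc_upper_bound_eq_one x y a w :
  orthocomplemented le c one ->
  Maxs le (Lc le (pair2 (c x) y)) a ->
  le a w -> le (c y) w -> le x w -> w = one.
Proof.
  intros Hoc Ha Haw Hyw Hxw.
  assert (Hwa : le (c w) a).
  { eapply Maxs_Lc_orth_le; eauto using c_antitone, le_cl. }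
  destruct (Hoc a) as (_ & _ & Hsup).
  apply le_antisym; [apply lex1 | apply Hsup; auto using le_cl].
Qed.

Hypothesis Hlub : lub_complete le.

Lemma Maxs_Lc_pair2_exists p q : exists a, Maxs le (Lc le (pair2 p q)) a.
Proof.
  assert (HM : forall z, Lc le (fun e => In e (p :: q :: nil)) z <-> le z p /\ le z q).
  { intros z. split.
    - intros Hz. split; apply Hz; simpl; auto.
    - intros [Hp Hq] e [<- | [<- | []]]; assumption. }
  destruct (@Hlub (p :: q :: nil) zero) as [m [[Hm Hmax] _]].
  { intros e _. apply le0x. }
  exists m. split.
  - apply Lc_pair2, HM, Hm.
  - intros w Hw Hmw. apply Hmax; [apply HM, Lc_pair2, Hw | exact Hmw].
Qed.

Lemma impK_le x y : le x y -> forall z,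
  impK le c x y z <->
  exists a b, Maxs le (Lc le (pair2 (c x) y)) a /\
    is_join le a (c y) b /\ is_join le b x z.
Proof.
  intros Hxy z.
  assert (Hyx : le (c y) (c x)) by (apply c_antitone, Hxy).
  split.
  - intros (b & m & (a & d & Ha & Hd & Hb) & (x' & u & -> & Hu & Hm) & Hz).
    apply (Maxs_Lc_pair2_le Hyx) in Hd. subst d.
    destruct Hu as [Hu _]. apply Uc_pair2 in Hu as [_ Hyu].
    apply (is_meet_le (le_trans Hxy Hyu)) in Hm. subst m.
    exists a, b. auto.
  - intros (a & b & Ha & Hb & Hz).
    destruct (Maxs_Lc_pair2_exists x (c y)) as [m Hm].
    rewrite <- (cK x) in Hm.
    apply Maxs_Lc_c_Mins_Uc in Hm.
    exists b, x. split; [| split; [| exact Hz]].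
    + exists a, (c y). split; [exact Ha | split; [| exact Hb]].
      apply (Maxs_Lc_pair2_le Hyx). reflexivity.
    + exists x, (c m). split; [reflexivity | split; [exact Hm |]].
      apply is_meet_le_self.
      destruct Hm as [Hm _]. apply Uc_pair2 in Hm as [_ Hym].
      apply (le_trans Hxy Hym).
Qed.

Lemma impK_le_one_of_orthocomplemented :
  orthocomplemented le c one -> forall x y, le x y -> is_one one (impK le c x y).
Proof.
  intros Hoc x y Hxy z. rewrite (impK_le Hxy). split.
  - intros (a & b & Ha & (Hab & Hyb & _) & (Hbz & Hxz & _)).
    apply (Maxs_Lc_upper_bound_eq_one Hoc Ha); eauto using le_trans.
  - intros ->.
    destruct (Maxs_Lc_pair2_exists (c x) y) as [a Ha].
    pose proof Ha as [Hay _]. apply Lc_pair2 in Hay as [Hax Hay].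
    destruct (@Horth a (c y)) as [b Hb]; [rewrite cK; exact Hay |].
    assert (Hbx : le b (c x)).
    { destruct Hb as (_ & _ & Hb). apply Hb; [exact Hax | apply c_antitone, Hxy]. }
    destruct (@Horth b x) as [j Hj]; [exact Hbx |].
    exists a, b. split; [exact Ha | split; [exact Hb |]].
    replace one with j; [exact Hj |].
    destruct Hb as (Hab & Hyb & _). destruct Hj as (Hbj & Hxj & _).
    apply (Maxs_Lc_upper_bound_eq_one Hoc Ha); eauto using le_trans.
Qed.

Lemma orthocomplemented_of_impK_le_one :
  (forall x y, le x y -> is_one one (impK le c x y)) -> orthocomplemented le c one.
Proof.
  intros HK x.
  assert (Hx0 : le x (c zero)) by (apply le_cr, le0x).
  pose proof (proj2 (HK zero x (le0x x) one) eq_refl) as H1.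
  destruct (proj1 (impK_le (le0x x) one) H1) as (a & b & Ha & Hb & H0).
  apply (Maxs_Lc_pair2_le Hx0) in Ha. subst a.
  replace one with b; [exact Hb |].
  apply (is_join_unique (is_join_le (le0x b)) H0).
Qed.

Lemma impK_le_one_iff_impN_le_one :
  (forall x y, le x y -> is_one one (impK le c x y)) <->
  (forall x y, le x y -> is_one one (impN le c x y)).
Proof.
  split; intros H x y Hxy.
  - apply H, c_antitone, Hxy.
  - rewrite <- (cK x), <- (cK y). apply H, c_antitone, Hxy.
Qed.

End OrthogonalPoset.

Theorem theorem4 (T : Type) (le : T -> T -> Prop) (c : T -> T) (zero one : T) :
  bounded_invol_poset le c zero one ->
  orthogonal le c ->
  lub_complete le ->
  (orthocomplemented le c one <->
     (forall x y, le x y -> is_one one (impK le c x y))) /\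
  ((forall x y, le x y -> is_one one (impK le c x y)) <->
     (forall x y, le x y -> is_one one (impN le c x y))).
Proof.
  intros HP Horth Hlub. split; [split |].
  - exact (impK_le_one_of_orthocomplemented HP Horth Hlub).
  - exact (orthocomplemented_of_impK_le_one HP Hlub).
  - exact (impK_le_one_iff_impN_le_one HP).
Qed.
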